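(* Let $n>4$ be an integer. The tournament $U_n$ has exactly two sparse orderings. Specifically, if $n$ is even, these are $\Pi(U_n)=\langle v_1,P(2),P(4),\dots,P(n-2),v_n\rangle$ and $\Pi_{1,n}(U_n)=\langle P(1),P(3),\dots,P(n-1)\rangle$; if $n$ is odd, these are $\Pi_1(U_n)=\langle P(1),P(3),\dots,P(n-2),v_n\rangle$ and $\Pi_n(U_n)=\langle v_1,P(2),P(4),\dots,P(n-3),P(n-1)\rangle$, where for $k\in[n-1]$, $P(k)$ denotes the two consecutive vertices $\langle v_{k+1},v_k\rangle$ (written in this order) and concatenation of such blocks gives the ordering.
   Context: For $n\ge1$, $U_n$ is the tournament with vertex set $\{v_1,\dots,v_n\}$ and arc set $\{(v_{i+1},v_i): i\in[n-1]\}\cup\{(v_i,v_j): 1\le i<n,\ i+1<j\le n\}$. For an ordering $\sigma$ of the vertices, an arc $(x,y)$ is backward if $y$ comes before $x$ in $\sigma$. An ordering is sparse if every vertex is incident to at most one backward arc. *)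

From mathcomp Require Import all_boot.
Set Implicit Arguments. Unset Strict Implicit. Unset Printing Implicit Defensive.

(* Vertices of U_n are the naturals 1..n, vertex v_i being i. *)

Definition U_arc (n : nat) (x y : nat) : bool :=
  [&& 1 <= x <= n, 1 <= y <= n & (x == y.+1) || (x.+1 < y)].

Definition is_ordering (n : nat) (s : seq nat) : bool := perm_eq s (iota 1 n).

Definition backward (n : nat) (s : seq nat) (x y : nat) : bool :=
  U_arc n x y && (index y s < index x s).

Definition sparse (n : nat) (s : seq nat) : Prop :=
  forall v, v \in s -> count (fun u => backward n s v u || backward n s u v) s <= 1.

Definition P (k : nat) : seq nat := [:: k.+1; k].
Definition blocks (ks : seq nat) : seq nat := flatten (map P ks).

(* Pi(U_n) = <v_1, P(2), P(4), ..., P(n-2), v_n> *)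
Definition Pi_even (n : nat) : seq nat :=
  1 :: blocks [seq 2 * i | i <- iota 1 (n./2).-1] ++ [:: n].
(* Pi_{1,n}(U_n) = <P(1), P(3), ..., P(n-1)> *)
Definition Pi1n_even (n : nat) : seq nat :=
  blocks [seq 2 * i + 1 | i <- iota 0 n./2].

(* Pi_1(U_n) = <P(1), P(3), ..., P(n-2), v_n> *)
Definition Pi1_odd (n : nat) : seq nat :=
  blocks [seq 2 * i + 1 | i <- iota 0 n./2] ++ [:: n].
(* Pi_n(U_n) = <v_1, P(2), P(4), ..., P(n-1)> *)
Definition Pin_odd (n : nat) : seq nat :=
  1 :: blocks [seq 2 * i | i <- iota 1 n./2].

From mathcomp Require Import all_boot zify.
Set Implicit Arguments. Unset Strict Implicit. Unset Printing Implicit Defensive.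

(* Induction on n, the case n = 5 being checked exhaustively.  In U_(n+1) the
   new vertex v_(n+1) has a single out-arc, to v_n, and in-arcs from v_1, ...,
   v_(n-1).  Hence in an ordering it has a backward arc with v_n if v_n comes
   first, and with every other vertex placed after it.  Deleting v_(n+1) from a
   sparse ordering thus leaves a sparse ordering of U_n, one of the two known
   ones, and at most two vertices follow v_(n+1).  The known orderings end with
   <v_(n-2), v_n> and <v_n, v_(n-1)>; of the remaining insertion places for
   v_(n+1), all but one give some v_k two backward arcs: one with v_(n+1) and
   one with v_(k-1) placed before it, or ones with v_(k-1) and v_(k+1) when
   v_(k-1), v_k, v_(k+1) appear in this order. *)

Definition back_adj (n : nat) (s : seq nat) (u v : nat) : bool :=
  backward n s u v || backward n s v u.

Definition back_deg (n : nat) (s : seq nat) (v : nat) : nat :=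
  count (back_adj n s v) s.

Definition sparse_ordering (n : nat) (s : seq nat) : Prop :=
  is_ordering n s /\ sparse n s.

Lemma back_adjC n s u v : back_adj n s u v = back_adj n s v u.
Proof. by rewrite /back_adj orbC. Qed.

Lemma back_adjxx n s v : back_adj n s v v = false.
Proof. by rewrite /back_adj /backward ltnn !andbF. Qed.

Lemma sparseP n s : reflect (sparse n s) (all (fun v => back_deg n s v <= 1) s).
Proof. exact: allP. Qed.

Lemma count_gt1 (T : eqType) (p : pred T) s u1 u2 :
  u1 != u2 -> u1 \in s -> u2 \in s -> p u1 -> p u2 -> 1 < count p s.
Proof.
move=> ne u1s u2s pu1 pu2; rewrite -size_filter.
apply: (uniq_leq_size (s1 := [:: u1; u2])); first by rewrite /= inE ne.
by move=> x; rewrite !inE => /orP[] /eqP ->; rewrite mem_filter ?pu1 ?pu2.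
Qed.

Lemma count_le1 (T : eqType) (p : pred T) s a :
  uniq s -> {in s, forall u, p u -> u = a} -> count p s <= 1.
Proof.
move=> us pa; rewrite -size_filter.
apply: (uniq_leq_size (s2 := [:: a])); first by rewrite filter_uniq.
by move=> x; rewrite mem_filter inE => /andP[px xs]; rewrite (pa x xs px).
Qed.

Lemma not_sparse n s v u1 u2 : v \in s -> u1 \in s -> u2 \in s -> u1 != u2 ->
  back_adj n s v u1 -> back_adj n s v u2 -> ~ sparse n s.
Proof.
move=> vs u1s u2s ne adj1 adj2 /(_ v vs).
by rewrite leqNgt (count_gt1 ne u1s u2s adj1 adj2).
Qed.

Lemma cat_eq_size_r (T : eqType) (s1 s2 t1 t2 : seq T) :
  s1 ++ t1 = s2 ++ t2 -> size t1 = size t2 -> s1 = s2 /\ t1 = t2.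
Proof.
move=> e st; have ss : size s1 = size s2.
  by move/(congr1 size): e; rewrite !size_cat st => /addIn.
by move/eqP: e; rewrite eqseq_cat // => /andP[/eqP -> /eqP ->].
Qed.

Section SplitIndex.
Variables (T : eqType) (X Z : seq T) (v : T).

Lemma index_split_l u : u \in X -> index u (X ++ v :: Z) < size X.
Proof. by move=> uX; rewrite index_cat uX index_mem. Qed.

Hypothesis uniq_s : uniq (X ++ v :: Z).

Lemma index_split_mid : index v (X ++ v :: Z) = size X.
Proof.
move: uniq_s; rewrite cat_uniq => /and3P[_ /hasPn/(_ v (mem_head _ _)) vX _].
by rewrite index_cat (negbTE vX) /= eqxx addn0.
Qed.

Lemma index_split_r u : u \in Z -> size X < index u (X ++ v :: Z).
Proof.
move=> uZ; move: uniq_s; rewrite cat_uniq => /and3P[_ /hasPn disj /= /andP[vZ _]].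
have uX : u \notin X by apply: disj; rewrite inE uZ orbT.
have uv : (v == u) = false by apply/negbTE; apply: contraNneq vZ => ->.
by rewrite index_cat (negbTE uX) /= uv addnS ltnS leq_addr.
Qed.

End SplitIndex.

Lemma mem_ordering n s x : is_ordering n s -> (x \in s) = (0 < x <= n).
Proof. by move=> /perm_mem ->; rewrite mem_iota; lia. Qed.

Lemma ordering_uniq n s : is_ordering n s -> uniq s.
Proof. by move=> /perm_uniq ->; exact: iota_uniq. Qed.

Lemma mem_ordering_prefix n s1 s2 x :
  is_ordering n (s1 ++ s2) -> 0 < x <= n -> x \notin s2 -> x \in s1.
Proof.
move=> ord xn xs2; move: (mem_ordering x ord).
by rewrite mem_cat (negbTE xs2) orbF xn.
Qed.

Lemma is_ordering_insert m t1 t2 :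
  is_ordering m.+1 (t1 ++ m.+1 :: t2) = is_ordering m (t1 ++ t2).
Proof.
rewrite /is_ordering -[m.+1 :: t2]cat1s perm_catCA cat1s.
have -> : iota 1 m.+1 = rcons (iota 1 m) m.+1 by rewrite -cats1 -[m.+1]addn1 iotaD add1n addn1.
by rewrite perm_sym perm_rcons perm_sym perm_cons.
Qed.

Lemma index_insert_lt (T : eqType) (t1 t2 : seq T) z x y : x != z -> y != z ->
  (index x (t1 ++ z :: t2) < index y (t1 ++ z :: t2)) =
  (index x (t1 ++ t2) < index y (t1 ++ t2)).
Proof.
move=> xz yz; rewrite !index_cat /= eq_sym (negbTE xz) eq_sym (negbTE yz).
move: (index_mem x t1) (index_mem y t1).
by case: (x \in t1); case: (y \in t1) => /= hx hy; apply/idP/idP; lia.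
Qed.

Lemma U_arc_lift m x y : x <= m -> y <= m -> U_arc m.+1 x y = U_arc m x y.
Proof. by rewrite /U_arc => xm ym; apply/idP/idP; lia. Qed.

Lemma U_arc_top_out m u : U_arc m.+1 m.+1 u = (0 < u) && (u == m).
Proof. by rewrite /U_arc; apply/idP/idP; lia. Qed.

Lemma U_arc_top_in m u : U_arc m.+1 u m.+1 = (0 < u < m).
Proof. by rewrite /U_arc; apply/idP/idP; lia. Qed.

Lemma back_adj_pred n s v :
  1 < v <= n -> back_adj n s v v.-1 = (index v.-1 s < index v s).
Proof.
move=> vn; rewrite /back_adj /backward.
have -> : U_arc n v v.-1 by rewrite /U_arc; lia.
have -> : U_arc n v.-1 v = false by rewrite /U_arc; apply/negbTE; lia.
by rewrite orbF.
Qed.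

Lemma not_sparse_pred_succ n X Z v : is_ordering n (X ++ v :: Z) ->
  v.-1 \in X -> v.+1 \in Z -> 1 < v -> ~ sparse n (X ++ v :: Z).
Proof.
set s := X ++ v :: Z => ord predX succZ v1.
have uniq_s := ordering_uniq ord.
have succs : v.+1 \in s by rewrite mem_cat inE succZ !orbT.
have vn : v.+1 <= n by move: (mem_ordering v.+1 ord); rewrite succs; lia.
apply: (not_sparse (v := v) (u1 := v.-1) (u2 := v.+1)).
- by rewrite mem_cat mem_head orbT.
- by rewrite mem_cat predX.
- exact: succs.
- by apply/eqP; lia.
- rewrite back_adj_pred; last lia.
  by rewrite index_split_mid // index_split_l.
- rewrite back_adjC back_adj_pred; last lia.
  by rewrite /= index_split_mid // index_split_r.
Qed.

Section DeleteTop.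
Variables (m : nat) (t1 t2 : seq nat).
Let s := t1 ++ m.+1 :: t2.
Let t := t1 ++ t2.
Hypothesis ord_t : is_ordering m t.

Lemma back_adj_delete v u : v \in t -> u \in t -> back_adj m.+1 s v u = back_adj m t v u.
Proof.
move=> vt ut; move: (mem_ordering v ord_t) (mem_ordering u ord_t); rewrite vt ut => vm um.
by rewrite /back_adj /backward !U_arc_lift ?index_insert_lt //; apply/eqP; lia.
Qed.

Lemma back_deg_delete v :
  v \in t -> back_deg m.+1 s v = back_deg m t v + back_adj m.+1 s v m.+1.
Proof.
move=> vt; rewrite /back_deg /s /t !count_cat /= addnCA [_ + (_ + _)]addnC.
by congr (_ + _ + _); apply: eq_in_count => u ut; apply: back_adj_delete;
  rewrite // mem_cat ut ?orbT.
Qed.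

Lemma sparse_delete : sparse m.+1 s -> sparse m t.
Proof.
move=> sp_s v vt; have vs : v \in s by rewrite mem_cat inE orbCA -mem_cat vt orbT.
by move: (sp_s v vs); rewrite [count _ _]back_deg_delete // => /(leq_trans (leq_addr _ _)).
Qed.

Lemma sparse_insert : sparse m t -> back_deg m.+1 s m.+1 <= 1 ->
  {in t, forall v, back_adj m.+1 s v m.+1 -> back_deg m t v = 0} -> sparse m.+1 s.
Proof.
move=> sp_t deg_top adj_top v; rewrite mem_cat inE orbCA -mem_cat => /orP[/eqP -> // | vt].
rewrite [count _ _]back_deg_delete //.
by case: (boolP (back_adj _ _ v _)) => [/(adj_top v vt) -> | _]; rewrite ?addn0 ?sp_t.
Qed.

End DeleteTop.

Section InsertedTop.
Variables (m : nat) (t1 t2 : seq nat).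
Let s := t1 ++ m.+1 :: t2.
Hypothesis ord_s : is_ordering m.+1 s.

Let uniq_s : uniq s := ordering_uniq ord_s.

Lemma back_adj_top_prefix u : u \in t1 -> back_adj m.+1 s m.+1 u = (u == m).
Proof.
move=> ut; have : 0 < u <= m.+1 by rewrite -(mem_ordering u ord_s) mem_cat ut.
have := index_split_l t2 m.+1 ut; rewrite -(index_split_mid uniq_s) => lt_u_top.
rewrite /back_adj /backward U_arc_top_out U_arc_top_in lt_u_top (leq_gtF (ltnW lt_u_top)).
by rewrite andbF andbT orbF; case: ltnP.
Qed.

Lemma back_adj_top_suffix u : u \in t2 -> back_adj m.+1 s m.+1 u = (u != m).
Proof.
move=> ut; have : 0 < u <= m.+1 by rewrite -(mem_ordering u ord_s) mem_cat inE ut !orbT.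
have := index_split_r uniq_s ut; rewrite -(index_split_mid uniq_s) => lt_top_u.
have u_top : u != m.+1.
  by apply: contraTneq ut => ->; move: uniq_s; rewrite cat_uniq /= => /and4P[].
rewrite /back_adj /backward U_arc_top_out U_arc_top_in lt_top_u (leq_gtF (ltnW lt_top_u)).
by rewrite andbF andbT /= => u_rng; apply/idP/idP; lia.
Qed.

Lemma not_sparse_suffix_gt2 : 2 < size t2 -> ~ sparse m.+1 s.
Proof.
move=> t2_big /(_ m.+1); rewrite mem_cat mem_head orbT => /(_ isT); apply/negP.
have uniq_t2 : uniq t2 by move: uniq_s; rewrite cat_uniq => /and3P[_ _ /andP[]].
have adj_t2 : count (back_adj m.+1 s m.+1) t2 = count (predC (pred1 m)) t2.
  by apply: eq_in_count => u /back_adj_top_suffix.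
have := count_predC (pred1 m) t2; rewrite count_uniq_mem // => size_t2.
rewrite -ltnNge [count _ _]count_cat /= adj_t2.
by case: (m \in t2) size_t2 => /=; lia.
Qed.

Lemma not_sparse_top_pred v : v \in t2 -> v.-1 \in t1 -> 1 < v < m -> ~ sparse m.+1 s.
Proof.
move=> vt2 pred_t1 v_rng.
have lt_pred_v : index v.-1 s < index v s.
  exact: ltn_trans (index_split_l t2 m.+1 pred_t1) (index_split_r uniq_s vt2).
apply: (not_sparse (v := v) (u1 := m.+1) (u2 := v.-1)).
- by rewrite mem_cat inE vt2 !orbT.
- by rewrite mem_cat mem_head orbT.
- by rewrite mem_cat pred_t1.
- by apply/eqP; lia.
- by rewrite back_adjC back_adj_top_suffix //; apply/eqP; lia.
- by rewrite back_adj_pred //; lia.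
Qed.

End InsertedTop.

Lemma back_deg_top_penult m W :
  is_ordering m.+1 (W ++ [:: m.+1; m]) -> back_deg m.+1 (W ++ [:: m.+1; m]) m.+1 = 0.
Proof.
move=> ord; rewrite /back_deg -(count_pred0 (W ++ [:: m.+1; m])).
have mW : m \notin W.
  move: (ordering_uniq ord); rewrite cat_uniq => /and3P[_ /hasPn mW _].
  by apply: mW; rewrite !inE eqxx orbT.
apply: eq_in_count => u; rewrite mem_cat !inE => /or3P[uW | /eqP -> | /eqP ->].
- by rewrite back_adj_top_prefix //; apply: contraNF mW => /eqP <-.
- exact: back_adjxx.
- by rewrite back_adj_top_suffix ?inE ?eqxx.
Qed.

Definition Pi_fst (n : nat) : seq nat := if odd n then Pi1_odd n else Pi_even n.
Definition Pi_snd (n : nat) : seq nat := if odd n then Pin_odd n else Pi1n_even n.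

Definition even_blocks (k : nat) : seq nat := blocks [seq 2 * i | i <- iota 1 k].
Definition odd_blocks (k : nat) : seq nat := blocks [seq 2 * i + 1 | i <- iota 0 k].

Lemma blocks_cat ks ls : blocks (ks ++ ls) = blocks ks ++ blocks ls.
Proof. by rewrite /blocks map_cat flatten_cat. Qed.

Lemma odd_blocksS k : odd_blocks k.+1 = odd_blocks k ++ [:: (2 * k).+2; (2 * k).+1].
Proof. by rewrite /odd_blocks -[k.+1]addn1 iotaD map_cat blocks_cat /= addn1. Qed.

Lemma even_blocksS k : even_blocks k.+1 = even_blocks k ++ [:: (2 * k).+3; (2 * k).+2].
Proof. by rewrite /even_blocks -[k.+1]addn1 iotaD map_cat blocks_cat /= add1n mulnS. Qed.

Lemma Pi_fst_double k : Pi_fst k.*2 = 1 :: even_blocks k.-1 ++ [:: k.*2].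
Proof. by rewrite /Pi_fst odd_double /Pi_even half_double. Qed.

Lemma Pi_snd_double k : Pi_snd k.*2 = odd_blocks k.
Proof. by rewrite /Pi_snd odd_double /Pi1n_even half_double. Qed.

Lemma Pi_fst_double_succ k : Pi_fst k.*2.+1 = odd_blocks k ++ [:: k.*2.+1].
Proof. by rewrite /Pi_fst /= odd_double /Pi1_odd /= uphalf_double. Qed.

Lemma Pi_snd_double_succ k : Pi_snd k.*2.+1 = 1 :: even_blocks k.
Proof. by rewrite /Pi_snd /= odd_double /Pin_odd /= uphalf_double. Qed.

Lemma Pi_fstS m : 0 < m -> Pi_fst m.+1 = Pi_snd m ++ [:: m.+1].
Proof.
rewrite -[m]odd_double_half; case: (odd m) => /=; rewrite ?add1n ?add0n => m_gt0.
- by rewrite -doubleS Pi_fst_double Pi_snd_double_succ.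
- by rewrite Pi_fst_double_succ Pi_snd_double.
Qed.

Lemma Pi_fst_sndS m : 2 < m ->
  exists2 Y, Pi_fst m = Y ++ [:: m - 2; m] & Pi_snd m.+1 = Y ++ [:: m - 2; m.+1; m].
Proof.
rewrite -[m]odd_double_half; case: (odd m); rewrite /= ?add1n ?add0n.
- case: m./2 => [|j] // _.
  rewrite Pi_fst_double_succ -doubleS Pi_snd_double !odd_blocksS -!catA.
  exists (odd_blocks j ++ [:: (2 * j).+2]); rewrite -catA;
    by congr (_ ++ _); do ?congr (_ :: _); lia.
- case: m./2 => [|[|j]] // _.
  rewrite Pi_fst_double Pi_snd_double_succ !even_blocksS -!catA /=.
  exists (1 :: even_blocks j ++ [:: (2 * j).+3]); rewrite /= -catA;
    by congr (_ :: _ ++ _); do ?congr (_ :: _); lia.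
Qed.

Lemma Pi_snd_suffix m : 2 < m -> exists W, Pi_snd m.+1 = W ++ [:: m.+1; m].
Proof. by case/Pi_fst_sndS => Y _ ->; exists (Y ++ [:: m - 2]); rewrite -catA. Qed.

Lemma Pi_fst_neq_snd m : 2 < m -> Pi_fst m.+1 != Pi_snd m.+1.
Proof.
move=> m_gt2; have [W eW] := Pi_snd_suffix m_gt2.
rewrite eW Pi_fstS; last lia.
by apply/eqP => /(congr1 (last 0)); rewrite !last_cat /=; lia.
Qed.

Lemma sparse_ordering_Pi_fstS m :
  3 < m -> sparse_ordering m (Pi_snd m) -> sparse_ordering m.+1 (Pi_fst m.+1).
Proof.
move=> m_gt3 [ord sp]; rewrite Pi_fstS; last lia.
have ord' : is_ordering m.+1 (Pi_snd m ++ [:: m.+1]) by rewrite is_ordering_insert cats0.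
split=> //; apply: (sparse_insert (t2 := [::])); rewrite ?cats0 //.
- apply: (count_le1 (a := m) (ordering_uniq ord')) => u.
  rewrite mem_cat inE => /orP[u_t | /eqP ->]; last by rewrite back_adjxx.
  by rewrite back_adj_top_prefix // => /eqP.
- move=> v v_t; rewrite back_adjC back_adj_top_prefix // => /eqP ->.
  case: m m_gt3 ord {sp ord' v_t} => // p p_gt2 ord.
  have [W eW] := Pi_snd_suffix p_gt2.
  by rewrite eW; apply: back_deg_top_penult; rewrite -eW.
Qed.

Lemma sparse_ordering_Pi_sndS m :
  2 < m -> sparse_ordering m (Pi_fst m) -> sparse_ordering m.+1 (Pi_snd m.+1).
Proof.
move=> m_gt2; have [Y -> ->] := Pi_fst_sndS m_gt2.
rewrite -[[:: m - 2; _; _]]/([:: m - 2] ++ [:: m.+1; m]).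
rewrite -[[:: m - 2; m]]/([:: m - 2] ++ [:: m]) !catA.
set t1 := Y ++ [:: m - 2] => -[ord sp].
have ord' : is_ordering m.+1 (t1 ++ [:: m.+1; m]) by rewrite is_ordering_insert.
have deg0 := back_deg_top_penult ord'.
split=> //; apply: sparse_insert; rewrite ?deg0 // => v v_t adj.
suff : 0 < back_deg m.+1 (t1 ++ [:: m.+1; m]) m.+1 by rewrite deg0.
rewrite -has_count; apply/hasP; exists v; last by rewrite back_adjC.
by move: v_t; rewrite !mem_cat !inE => /orP[-> | ->]; rewrite ?orbT.
Qed.

Lemma insert_top_Pi_fst m t1 t2 : 3 < m -> sparse_ordering m.+1 (t1 ++ m.+1 :: t2) ->
  t1 ++ t2 = Pi_fst m -> t1 ++ m.+1 :: t2 = Pi_snd m.+1.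
Proof.
move=> m_gt3 [ord sp]; have [Y -> ->] := Pi_fst_sndS (ltnW m_gt3).
have [t2_big | ] := ltnP 2 (size t2).
  by case: (not_sparse_suffix_gt2 ord t2_big sp).
case: t2 ord sp => [|x [|y [|z r]]] //= ord sp _ e.
- rewrite cats0 in e; subst t1; exfalso.
  have split_m : (Y ++ [:: m - 2; m]) ++ [:: m.+1] = (Y ++ [:: m - 2]) ++ m :: [:: m.+1].
    by rewrite -!catA.
  rewrite split_m in ord sp; apply: (not_sparse_pred_succ ord _ (mem_head _ _) _ sp); last lia.
  by apply: (mem_ordering_prefix ord); rewrite ?inE; lia.
- have [-> [->]] := cat_eq_size_r (etrans e (catA Y [:: m - 2] [:: m])) erefl.
  by rewrite -catA.
- have [? [? ?]] := cat_eq_size_r e erefl; subst t1 x y; exfalso.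
  apply: (not_sparse_top_pred ord (mem_head _ _) _ _ sp); last lia.
  by apply: (mem_ordering_prefix ord); rewrite ?inE; lia.
Qed.

Lemma insert_top_Pi_snd m t1 t2 : 4 < m -> sparse_ordering m.+1 (t1 ++ m.+1 :: t2) ->
  t1 ++ t2 = Pi_snd m -> t1 ++ m.+1 :: t2 = Pi_fst m.+1.
Proof.
move=> m_gt4 [ord sp]; rewrite Pi_fstS; last lia.
case: t2 ord sp => [|x t2] ord sp e; first by rewrite -e cats0.
exfalso; case: m m_gt4 ord sp e => // p p_gt3 ord sp.
have [W ->] := Pi_snd_suffix (ltnW p_gt3).
have [t2_big | ] := ltnP 2 (size (x :: t2)).
  by case: (not_sparse_suffix_gt2 ord t2_big sp).
case: t2 ord sp => [|y [|z r]] //= ord sp _ e.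
- have [? [?]] := cat_eq_size_r (etrans e (catA W [:: p.+1] [:: p])) erefl.
  subst t1 x; apply: (not_sparse_top_pred ord (mem_head _ _) _ _ sp); last lia.
  by apply: (mem_ordering_prefix ord); rewrite ?inE; lia.
- have [? [? ?]] := cat_eq_size_r e erefl; subst t1 x y.
  apply: (not_sparse_top_pred ord (v := p) _ _ _ sp); rewrite ?inE ?eqxx ?orbT //; last lia.
  by apply: (mem_ordering_prefix ord); rewrite ?inE; lia.
Qed.

Lemma sparse_ordering5_Pi : sparse_ordering 5 (Pi_fst 5) /\ sparse_ordering 5 (Pi_snd 5).
Proof. by split; split; try apply/sparseP; vm_compute. Qed.

Lemma sparse_ordering5_eq_Pi s : sparse_ordering 5 s -> s = Pi_fst 5 \/ s = Pi_snd 5.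
Proof.
case=> ord /sparseP sp; have : s \in permutations (iota 1 5) by rewrite mem_permutations.
have all5 : all (fun s => all (fun v => back_deg 5 s v <= 1) s ==>
                          (s == Pi_fst 5) || (s == Pi_snd 5)) (permutations (iota 1 5)).
  by vm_compute.
by move/(allP all5); rewrite sp => /orP[] /eqP; [left | right].
Qed.

Lemma sparse_ordering_Pi n :
  4 < n -> sparse_ordering n (Pi_fst n) /\ sparse_ordering n (Pi_snd n).
Proof.
elim: n => // m IH; rewrite ltnS leq_eqVlt => /orP[/eqP <- | m_gt4].
  exact: sparse_ordering5_Pi.
have [spA spB] := IH m_gt4.
by split; [apply: sparse_ordering_Pi_fstS | apply: sparse_ordering_Pi_sndS] => //; lia.
Qed.

Lemma sparse_ordering_eq_Pi n s :
  4 < n -> sparse_ordering n s -> s = Pi_fst n \/ s = Pi_snd n.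
Proof.
elim: n s => // m IH s; rewrite ltnS leq_eqVlt => /orP[/eqP <- | m_gt4].
  exact: sparse_ordering5_eq_Pi.
move=> sp_s; have top_s : m.+1 \in s by rewrite (mem_ordering _ sp_s.1) leqnn.
case/splitPr: top_s sp_s => t1 t2 sp_s; have [ord sp] := sp_s.
have ord_t : is_ordering m (t1 ++ t2) by rewrite -is_ordering_insert.
have [e | e] := IH _ m_gt4 (conj ord_t (sparse_delete ord_t sp)).
- by right; apply: insert_top_Pi_fst (ltnW m_gt4) sp_s e.
- by left; apply: insert_top_Pi_snd m_gt4 sp_s e.
Qed.

Theorem mainTheorem5 (n : nat) : 4 < n ->
  if ~~ odd n then
    Pi_even n != Pi1n_even n /\
    forall s : seq nat, (is_ordering n s /\ sparse n s) <-> (s = Pi_even n \/ s = Pi1n_even n)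
  else
    Pi1_odd n != Pin_odd n /\
    forall s : seq nat, (is_ordering n s /\ sparse n s) <-> (s = Pi1_odd n \/ s = Pin_odd n).
Proof.
move=> n_gt4; have neq : Pi_fst n != Pi_snd n.
  by case: n n_gt4 => // m m_gt3; apply: Pi_fst_neq_snd; rewrite ltnW.
have sparseE s : sparse_ordering n s <-> s = Pi_fst n \/ s = Pi_snd n.
  split; first exact: sparse_ordering_eq_Pi.
  by have [? ?] := sparse_ordering_Pi n_gt4; case=> ->.
by rewrite /Pi_fst /Pi_snd in neq sparseE; case: (odd n) neq sparseE.
Qed.
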